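(* Let $A$ be a basic connected finite dimensional algebra over an algebraically closed field $k$ with ordinary quiver $Q$ without oriented cycles. Let $\nu\colon kQ\twoheadrightarrow A$ be a presentation, $\varphi_{\alpha,u,\tau}$ a transvection of $kQ$, and $\mu:=\nu\circ\varphi_{\alpha,u,\tau}$. Set $I=\mathsf{Ker}(\nu)$, $J=\mathsf{Ker}(\mu)$ (so $I=\varphi_{\alpha,u,\tau}(J)$). Suppose $\alpha\sim_J u$, and let $p\colon\pi_1(Q,I)\twoheadrightarrow\pi_1(Q,J)$, $[\gamma]_I\mapsto[\gamma]_J$, be the surjective group homomorphism induced by the identity on walks. Then $\theta_\mu=\theta_\nu\circ p^*$, where $p^*\colon\mathsf{Hom}(\pi_1(Q,J),k^+)\hookrightarrow\mathsf{Hom}(\pi_1(Q,I),k^+)$, $f\mapsto f\circ p$. In particular $\mathsf{Im}(\theta_\mu)\subseteq\mathsf{Im}(\theta_\nu)$.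
   Context: Fix a complete set $e_1,\dots,e_n$ of primitive orthogonal idempotents of $A$ indexed by $Q_0=\{1,\dots,n\}$, $E=\bigoplus ke_i$. A presentation is a surjective algebra map $\nu\colon kQ\twoheadrightarrow A$ with admissible kernel ($(kQ^+)^N\subseteq\mathsf{Ker}\,\nu\subseteq(kQ^+)^2$ for some $N\ge2$, $kQ^+$ the arrow ideal) and $\nu(e_i)=e_i$. A bypass is a pair $(\alpha,u)$ with $\alpha$ an arrow and $u$ an oriented path parallel to and distinct from $\alpha$; for $\tau\in k$ the transvection $\varphi_{\alpha,u,\tau}$ is the automorphism of $kQ$ fixing all $e_i$ and all arrows other than $\alpha$ and mapping $\alpha$ to $\alpha+\tau u$. Walks: paths with formal inverse arrows allowed. $\sim_I$ is the smallest equivalence relation on walks with $\alpha\alpha^{-1}\sim_I e_y$, $\alpha^{-1}\alpha\sim_I e_x$ for arrows $\alpha\colon x\to y$, compatible with concatenation, and identifying two paths occurring with nonzero coefficient in a same minimal relation of $I$ (a nonzero $\sum t_iu_i\in I$, $t_i\neq0$, distinct paths, no nonempty proper subsum in $I$). $\pi_1(Q,I)$ is the group of classes of closed walks at a fixed vertex $x_0$. It is known that under the hypothesis $\alpha\sim_J u$ the relation $\sim_I$ is finer than $\sim_J$, so $p$ is well defined and surjective. $\mathsf{HH}^1(A)=Der_0(A)/Int_0(A)$, with $Der_0(A)$ the derivations vanishing on all $e_i$ and $Int_0(A)=\{a\mapsto ea-ae\mid e\in E\}$. Fix a maximal tree $T$ of $Q$, $\gamma_x$ the minimal walk in $T$ from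 $x_0$ to $x$. For a presentation $\nu$ with kernel $I$ and group homomorphism $f\colon\pi_1(Q,I)\to k^+$, $\theta_\nu(f)$ is the class of the derivation $\tilde f$ with $\tilde f(\nu(u))=f([\gamma_y^{-1}u\gamma_x]_I)\nu(u)$ for paths $u$ from $x$ to $y$. *)

From HB Require Import structures.
From mathcomp Require Import all_boot all_order all_algebra all_field.
Set Implicit Arguments. Unset Strict Implicit. Unset Printing Implicit Defensive.
Import GRing.Theory.
Local Open Scope ring_scope.

Section Quiver.
Variables (n : nat) (Ar : finType) (src tgt : Ar -> 'I_n).

(* An oriented path is a start vertex together with the list of its arrows
   in order of traversal; (x, [::]) is the trivial path e_x.  The path
   alpha_m ... alpha_1 (alpha_1 first) is stored as (x, [:: alpha_1; ...; alpha_m]). *)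
Definition qpath := ('I_n * seq Ar)%type.

Fixpoint pvalid (x : 'I_n) (l : seq Ar) : bool :=
  if l is a :: l' then (src a == x) && pvalid (tgt a) l' else true.

Definition is_qpath (u : qpath) := pvalid u.1 u.2.
Definition qpend (u : qpath) : 'I_n := last u.1 (map tgt u.2).

Definition no_oriented_cycle :=
  forall u : qpath, is_qpath u -> u.2 != [::] -> qpend u != u.1.

(* Walks: letters are arrows (true) or formal inverses of arrows (false);
   again stored as start vertex + letters in order of traversal. *)
Definition letter := (Ar * bool)%type.
Definition lsrc (a : letter) : 'I_n := if a.2 then src a.1 else tgt a.1.
Definition ltgt (a : letter) : 'I_n := if a.2 then tgt a.1 else src a.1.

Fixpoint wvalid (x : 'I_n) (l : seq letter) : bool :=
  if l is a :: l' then (lsrc a == x) && wvalid (ltgt a) l' else true.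

Definition qwalk := ('I_n * seq letter)%type.
Definition is_walk (w : qwalk) := wvalid w.1 w.2.
Definition wstart (w : qwalk) : 'I_n := w.1.
Definition wend (w : qwalk) : 'I_n := last w.1 (map ltgt w.2).
(* wcat w1 w2 : first w1, then w2 (in the paper's composition notation
   this is the walk  w2 w1). *)
Definition wcat (w1 w2 : qwalk) : qwalk := (w1.1, w1.2 ++ w2.2).
Definition winv (w : qwalk) : qwalk :=
  (wend w, rev (map (fun a : letter => (a.1, ~~ a.2)) w.2)).
Definition pwalk (u : qpath) : qwalk := (u.1, map (fun a => (a, true)) u.2).
Definition arrow_path (a : Ar) : qpath := (src a, [:: a]).

Definition closed_at (x0 : 'I_n) (w : qwalk) :=
  [&& is_walk w, wstart w == x0 & wend w == x0].

Definition in_tree (T : {set Ar}) (w : qwalk) := all (fun a : letter => a.1 \in T) w.2.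

Fixpoint reduced (l : seq letter) : bool :=
  if l is a :: l' then
    (if l' is b :: _ then ~~ ((a.1 == b.1) && (a.2 != b.2)) else true) && reduced l'
  else true.

Definition max_tree (T : {set Ar}) :=
  (forall x y : 'I_n, exists w, [/\ is_walk w, wstart w = x, wend w = y & in_tree T w])
  /\ (forall w, is_walk w -> in_tree T w -> reduced w.2 -> w.2 != [::] ->
        wend w != wstart w).

Definition gamma_ok (T : {set Ar}) (x0 : 'I_n) (gamma : 'I_n -> qwalk) :=
  forall x, [/\ is_walk (gamma x), wstart (gamma x) = x0, wend (gamma x) = x,
    in_tree T (gamma x) &
    forall w, is_walk w -> wstart w = x0 -> wend w = x -> in_tree T w ->
      size (gamma x).2 <= size w.2]%N.

Definition bypass (al : Ar) (u : qpath) :=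
  [/\ is_qpath u, u.1 = src al, qpend u = tgt al & u != arrow_path al].

Variables (k : fieldType) (A : falgType k) (e : 'I_n -> A).

Definition primitive_idem (f : A) :=
  f != 0 /\ forall g h : A, g * g = g -> h * h = h -> g * h = 0 -> h * g = 0 ->
    f = g + h -> g = 0 \/ h = 0.

Definition complete_prim_orth_idems :=
  [/\ forall i, e i * e i = e i, forall i j, i != j -> e i * e j = 0,
      \sum_i e i = 1 & forall i, primitive_idem (e i)].

(* A basic: the e_i A are pairwise non-isomorphic *)
Definition basic_alg :=
  forall i j : 'I_n, i != j -> ~ exists a b : A,
    [/\ a = e j * a * e i, b = e i * b * e j, a * b = e j & b * a = e i].

Definition connected_alg :=
  forall c : A, c * c = c -> (forall a, c * a = a * c) -> c = 0 \/ c = 1.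

(* An algebra map kQ -> A fixing the e_i is given by its values on arrows;
   nuPath nu u is the image of the path u. *)
Definition nuPath (nu : Ar -> A) (u : qpath) : A :=
  foldl (fun acc a => nu a * acc) (e u.1) u.2.

(* image of the element  sum_{v in s} t_v v  of kQ *)
Definition lincomb (nu : Ar -> A) (s : seq qpath) (t : qpath -> k) : A :=
  \sum_(v <- s) t v *: nuPath nu v.

Definition is_kQelt (s : seq qpath) := uniq s && all is_qpath s.

Definition presentation (nu : Ar -> A) :=
  [/\ forall a, e (tgt a) * nu a * e (src a) = nu a,
      forall x : A, exists s t, is_kQelt s /\ x = lincomb nu s t,
      (exists2 N, (2 <= N)%N & forall u, is_qpath u -> (N <= size u.2)%N -> nuPath nu u = 0)
    & forall s t, is_kQelt s -> lincomb nu s t = 0 ->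
        forall v, v \in s -> (size v.2 <= 1)%N -> t v = 0].

Definition minrel (nu : Ar -> A) (s : seq qpath) (t : qpath -> k) :=
  [/\ is_kQelt s, s != [::], forall v, v \in s -> t v != 0,
      lincomb nu s t = 0 &
      forall s', subseq s' s -> s' != [::] -> s' != s -> lincomb nu s' t != 0].

Inductive homot (nu : Ar -> A) : qwalk -> qwalk -> Prop :=
| homot_refl w : homot nu w w
| homot_sym w w' : homot nu w w' -> homot nu w' w
| homot_trans w1 w2 w3 : homot nu w1 w2 -> homot nu w2 w3 -> homot nu w1 w3
| homot_cancel_tgt a : homot nu (tgt a, [:: (a, false); (a, true)]) (tgt a, [::])
| homot_cancel_src a : homot nu (src a, [:: (a, true); (a, false)]) (src a, [::])
| homot_rel s t u u' : minrel nu s t -> u \in s -> u' \in s ->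
    homot nu (pwalk u) (pwalk u')
| homot_cat w1 w1' w2 w2' : is_walk w1 -> is_walk w1' -> is_walk w2 -> is_walk w2' ->
    wend w1 = wstart w2 -> wend w1' = wstart w2' ->
    homot nu w1 w1' -> homot nu w2 w2' -> homot nu (wcat w1 w2) (wcat w1' w2').

(* group homomorphisms pi_1(Q, Ker nu) -> k^+, as functions on closed walks
   at x0 that are constant on homotopy classes and additive *)
Definition pi1_hom (nu : Ar -> A) (x0 : 'I_n) (F : qwalk -> k) :=
  (forall w w', closed_at x0 w -> closed_at x0 w' -> homot nu w w' -> F w = F w')
  /\ (forall w w', closed_at x0 w -> closed_at x0 w' -> F (wcat w w') = F w + F w').

(* transvection: mu = nu o phi_{al,u,tau} on arrows *)
Definition transvect (nu : Ar -> A) (al : Ar) (u : qpath) (tau : k) : Ar -> A :=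
  fun b => if b == al then nu al + tau *: nuPath nu u else nu b.

Definition der0 (D : A -> A) :=
  [/\ forall (c : k) a b, D (c *: a + b) = c *: D a + D b,
      forall a b, D (a * b) = D a * b + a * D b & forall i, D (e i) = 0].

Definition int0 (D : A -> A) :=
  exists c : 'I_n -> k, forall a,
    D a = (\sum_i c i *: e i) * a - a * (\sum_i c i *: e i).

(* D is the derivation  tilde f  representing theta_nu(f)  *)
Definition theta_rep (nu : Ar -> A) (gamma : 'I_n -> qwalk) (F : qwalk -> k) (D : A -> A) :=
  der0 D /\ forall u : qpath, is_qpath u ->
    D (nuPath nu u) =
      F (wcat (wcat (gamma u.1) (pwalk u)) (winv (gamma (qpend u)))) *: nuPath nu u.

End Quiver.

(* Both representatives are derivations vanishing on the e_i, so they coincide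
   as soon as they agree on the images nu(b) of the arrows, which generate A.
   For b <> alpha we have mu(b) = nu(b), and both derivations multiply it by
   f of the same closed walk.  For b = alpha we have
   mu(alpha) = nu(alpha) + tau nu(u), and alpha does not occur in u because Q
   has no oriented cycles, so mu(u) = nu(u).  Since alpha ~_J u, f takes the
   same value c on the closed walks through alpha and through u; hence the
   representative of theta_mu(f) sends nu(alpha) = mu(alpha) - tau mu(u) to
   c nu(alpha), exactly as the representative of theta_nu(f o p) does.  The
   two derivations are therefore equal and their difference is inner. *)
From HB Require Import structures.
From mathcomp Require Import all_boot all_order all_algebra all_field.
Import GRing.Theory.
Local Open Scope ring_scope.
Set Implicit Arguments. Unset Strict Implicit.

Section Walks.
Variables (n : nat) (Ar : finType) (src tgt : Ar -> 'I_n).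

Lemma pvalid_cat x l1 l2 : pvalid src tgt x (l1 ++ l2) =
  pvalid src tgt x l1 && pvalid src tgt (last x (map tgt l1)) l2.
Proof. by elim: l1 x => [|a l IH] x //=; rewrite IH andbA. Qed.

Lemma wvalid_cat x l1 l2 : wvalid src tgt x (l1 ++ l2) =
  wvalid src tgt x l1 && wvalid src tgt (last x (map (ltgt src tgt) l1)) l2.
Proof. by elim: l1 x => [|a l IH] x //=; rewrite IH andbA. Qed.

Lemma is_walk_wcat w1 w2 : is_walk src tgt w1 -> is_walk src tgt w2 ->
  wend src tgt w1 = wstart w2 -> is_walk src tgt (wcat w1 w2).
Proof.
by case: w1 w2 => [x1 l1] [x2 l2]; rewrite /is_walk /wend /wcat /= wvalid_cat => -> + ->.
Qed.

Lemma wend_wcat w1 w2 : wend src tgt w1 = wstart w2 ->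
  wend src tgt (wcat w1 w2) = wend src tgt w2.
Proof. by case: w1 w2 => [x1 l1] [x2 l2]; rewrite /wend /= map_cat last_cat => ->. Qed.

Lemma is_walk_pwalk v : is_qpath src tgt v -> is_walk src tgt (pwalk v).
Proof.
case: v => x l; rewrite /is_qpath /is_walk /=.
by elim: l x => [|a l IH] x //= /andP[-> /IH].
Qed.

Lemma wend_pwalk v : wend src tgt (pwalk v) = qpend tgt v.
Proof. by rewrite /wend /qpend /= -map_comp. Qed.

Lemma winv_walk w : is_walk src tgt w ->
  is_walk src tgt (winv src tgt w) /\ wend src tgt (winv src tgt w) = wstart w.
Proof.
case: w => x l; rewrite /is_walk /wend /wstart /winv /=.
elim: l x => [|a l IH] x //= /andP[/eqP a_x /IH[l_walk l_end]].
rewrite rev_cons -cats1 wvalid_cat l_walk map_cat last_cat l_end.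
by move: a_x {IH l_walk l_end}; rewrite /lsrc /ltgt; case: a => b [] /= ->; rewrite eqxx.
Qed.

Lemma is_qpath_arrow_path b : is_qpath src tgt (arrow_path src b).
Proof. by rewrite /is_qpath /= eqxx. Qed.

(* An occurrence of alpha in u would split u into two oriented cycles, one of
   which is nontrivial because u differs from alpha. *)
Lemma bypass_arrow_notin al u :
  no_oriented_cycle src tgt -> bypass src tgt al u -> al \notin u.2.
Proof.
move=> acyclic; case: u => x l [u_path /= x_src u_end u_neq]; subst x.
apply/negP => /splitPr u_split; case: u_split u_path u_end u_neq => l1 l2.
rewrite /is_qpath /= pvalid_cat /= => /and3P[l1_path /eqP l1_end l2_path].
rewrite /qpend /= map_cat last_cat /= => l2_end u_neq.
case: l1 l1_path l1_end u_neq => [|a l1] l1_path l1_end u_neq.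
  case: l2 l2_path l2_end u_neq => [|b l2] l2_path l2_end u_neq.
    by rewrite eqxx in u_neq.
  by have /negP[] := acyclic (tgt al, b :: l2) l2_path isT; rewrite /qpend l2_end.
by have /negP[] := acyclic (src al, a :: l1) l1_path isT; rewrite /qpend l1_end.
Qed.

End Walks.

Section TreeLoops.
Variables (n : nat) (Ar : finType) (src tgt : Ar -> 'I_n).
Variables (x0 : 'I_n) (gamma : 'I_n -> qwalk n Ar).
Hypothesis gamma_walk : forall x, is_walk src tgt (gamma x).
Hypothesis gamma_start : forall x, wstart (gamma x) = x0.
Hypothesis gamma_end : forall x, wend src tgt (gamma x) = x.

Definition tree_loop (v : qpath n Ar) : qwalk n Ar :=
  wcat (wcat (gamma v.1) (pwalk v)) (winv src tgt (gamma (qpend tgt v))).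

Lemma wend_tree_loop_head v :
  wend src tgt (wcat (gamma v.1) (pwalk v)) = qpend tgt v.
Proof. by rewrite wend_wcat ?wend_pwalk. Qed.

Lemma is_walk_tree_loop_head v :
  is_qpath src tgt v -> is_walk src tgt (wcat (gamma v.1) (pwalk v)).
Proof. by move=> v_path; rewrite is_walk_wcat ?is_walk_pwalk. Qed.

Lemma closed_tree_loop v : is_qpath src tgt v -> closed_at src tgt x0 (tree_loop v).
Proof.
move=> v_path; have [inv_walk inv_end] := winv_walk (gamma_walk (qpend tgt v)).
have head_end := wend_tree_loop_head v.
apply/and3P; split; rewrite /tree_loop.
- by apply: is_walk_wcat; rewrite ?is_walk_tree_loop_head //= head_end gamma_end.
- by rewrite -(gamma_start v.1).
- by rewrite wend_wcat; [rewrite inv_end gamma_start | rewrite /= head_end gamma_end].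
Qed.

Lemma homot_tree_loop (k : fieldType) (A : falgType k) (e : 'I_n -> A)
    (nu : Ar -> A) v v' :
  is_qpath src tgt v -> is_qpath src tgt v' -> v.1 = v'.1 -> qpend tgt v = qpend tgt v' ->
  homot src tgt e nu (pwalk v) (pwalk v') ->
  homot src tgt e nu (tree_loop v) (tree_loop v').
Proof.
move=> v_path v'_path eq_start eq_end hvv'; rewrite /tree_loop -eq_start -eq_end.
have inv_walk := (winv_walk (gamma_walk (qpend tgt v))).1.
apply: homot_cat => //.
- exact: is_walk_tree_loop_head.
- by rewrite eq_start; apply: is_walk_tree_loop_head.
- by rewrite wend_tree_loop_head /= gamma_end.
- by rewrite eq_start wend_tree_loop_head -eq_end /= gamma_end.
- by apply: homot_cat; rewrite ?is_walk_pwalk ?gamma_end //; apply: homot_refl.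
- exact: homot_refl.
Qed.

End TreeLoops.

Section PathImages.
Variables (n : nat) (Ar : finType) (k : fieldType) (A : falgType k) (e : 'I_n -> A).

Lemma foldl_mulr (nu : Ar -> A) (acc y : A) l :
  foldl (fun acc a => nu a * acc) (acc * y) l = foldl (fun acc a => nu a * acc) acc l * y.
Proof. by elim: l acc => [|a l IH] acc //=; rewrite mulrA IH. Qed.

Lemma nuPath_mulr_src (nu : Ar -> A) (v : qpath n Ar) :
  e v.1 * e v.1 = e v.1 -> nuPath e nu v * e v.1 = nuPath e nu v.
Proof. by move=> e_idem; rewrite /nuPath -foldl_mulr e_idem. Qed.

Lemma eq_in_nuPath (nu1 nu2 : Ar -> A) (v : qpath n Ar) :
  {in v.2, nu1 =1 nu2} -> nuPath e nu1 v = nuPath e nu2 v.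
Proof.
case: v => x l; rewrite /nuPath /=; elim: l (e x) => [|a l IH] acc //= eq_nu.
by rewrite eq_nu ?mem_head // IH // => b b_l; rewrite eq_nu // in_cons b_l orbT.
Qed.

Lemma nuPath_arrow_path (src : Ar -> 'I_n) (nu : Ar -> A) b :
  nu b * e (src b) = nu b -> nuPath e nu (arrow_path src b) = nu b.
Proof. by []. Qed.

Lemma presentation_arrow_src (src tgt : Ar -> 'I_n) (nu : Ar -> A) b :
  presentation src tgt e nu -> e (src b) * e (src b) = e (src b) ->
  nu b * e (src b) = nu b.
Proof. by case=> nu_e _ _ _ e_idem; rewrite -{1}nu_e -mulrA e_idem nu_e. Qed.

Lemma der0_0 (D : A -> A) : der0 e D -> D 0 = 0.
Proof. by case=> _ D_mul _; have := D_mul 0 0; rewrite !mulr0 mul0r addr0. Qed.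

Lemma der0_nuPath (nu : Ar -> A) (D1 D2 : A -> A) :
  der0 e D1 -> der0 e D2 -> (forall b, D1 (nu b) = D2 (nu b)) ->
  forall v, D1 (nuPath e nu v) = D2 (nuPath e nu v).
Proof.
move=> [_ D1_mul D1_e] [_ D2_mul D2_e] eq_arrows [x l]; rewrite /nuPath /=.
have : D1 (e x) = D2 (e x) by rewrite D1_e D2_e.
by elim: l (e x) => [|a l IH] acc //= eq_acc; rewrite IH // D1_mul D2_mul eq_arrows eq_acc.
Qed.

Lemma der0_eq_presentation (src tgt : Ar -> 'I_n) (nu : Ar -> A) (D1 D2 : A -> A) :
  presentation src tgt e nu -> der0 e D1 -> der0 e D2 ->
  (forall b, D1 (nu b) = D2 (nu b)) -> D1 =1 D2.
Proof.
move=> [_ nu_onto _ _] D1_der D2_der eq_arrows a.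
have [s [t [_ ->]]] := nu_onto a; rewrite /lincomb.
have [[D1_lin _ _] [D2_lin _ _]] := (D1_der, D2_der).
elim: s => [|v s IH]; first by rewrite !big_nil !der0_0.
by rewrite !big_cons D1_lin D2_lin IH (der0_nuPath D1_der D2_der).
Qed.

Lemma int0_eq0 (D : A -> A) : D =1 (fun=> 0) -> int0 e D.
Proof.
move=> D0; exists (fun=> 0) => a.
by rewrite D0 big1 ?mul0r ?mulr0 ?subrr // => i _; rewrite scale0r.
Qed.

End PathImages.

Section Transvection.
Variables (n : nat) (Ar : finType) (src tgt : Ar -> 'I_n).
Variables (k : fieldType) (A : falgType k) (e : 'I_n -> A).
Variables (nu : Ar -> A) (al : Ar) (u : qpath n Ar) (tau : k).
Local Notation mu := (transvect e nu al u tau).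

Lemma transvect_arrow : mu al = nu al + tau *: nuPath e nu u.
Proof. by rewrite /transvect eqxx. Qed.

Lemma transvect_other b : b != al -> mu b = nu b.
Proof. by rewrite /transvect => /negbTE ->. Qed.

Lemma nuPath_transvect v : al \notin v.2 -> nuPath e mu v = nuPath e nu v.
Proof.
move=> al_v; apply: eq_in_nuPath => b b_v; apply: transvect_other.
by apply: contraNneq al_v => <-.
Qed.

Lemma transvect_arrow_src b :
  (forall i, e i * e i = e i) -> (forall c, nu c * e (src c) = nu c) ->
  u.1 = src al -> mu b * e (src b) = mu b.
Proof.
move=> e_idem nu_src u_start; have [->|/transvect_other ->] := eqVneq b al; last first.
  exact: nu_src.
by rewrite transvect_arrow mulrDl nu_src -scalerAl -u_start nuPath_mulr_src.
Qed.

Variables (F : qwalk n Ar -> k) (x0 : 'I_n) (gamma : 'I_n -> qwalk n Ar).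
Hypothesis gamma_walk : forall x, is_walk src tgt (gamma x).
Hypothesis gamma_start : forall x, wstart (gamma x) = x0.
Hypothesis gamma_end : forall x, wend src tgt (gamma x) = x.
Local Notation loop := (tree_loop src tgt gamma).

Lemma theta_rep_arrow (nu' : Ar -> A) (D : A -> A) b :
  theta_rep src tgt e nu' gamma F D -> nu' b * e (src b) = nu' b ->
  D (nu' b) = F (loop (arrow_path src b)) *: nu' b.
Proof.
move=> [_ D_paths] nu'_src.
by have := D_paths _ (is_qpath_arrow_path src tgt b); rewrite nuPath_arrow_path.
Qed.

Hypothesis u_bypass : bypass src tgt al u.
Hypothesis al_notin_u : al \notin u.2.
Hypothesis e_idem : forall i, e i * e i = e i.
Hypothesis nu_src : forall b, nu b * e (src b) = nu b.
Hypothesis F_homot : forall w w', closed_at src tgt x0 w -> closed_at src tgt x0 w' ->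
  homot src tgt e mu w w' -> F w = F w'.
Hypothesis al_homot_u : homot src tgt e mu (pwalk (arrow_path src al)) (pwalk u).

Lemma F_tree_loop_bypass : F (loop (arrow_path src al)) = F (loop u).
Proof.
case: u_bypass => u_path u_start u_end _.
have al_path := is_qpath_arrow_path src tgt al.
by apply: F_homot; rewrite ?closed_tree_loop //; apply: homot_tree_loop.
Qed.

Lemma theta_rep_transvect_arrows (D1 D2 : A -> A) :
  theta_rep src tgt e mu gamma F D1 -> theta_rep src tgt e nu gamma F D2 ->
  forall b, D1 (nu b) = D2 (nu b).
Proof.
move=> D1_rep D2_rep b.
have mu_src b' : mu b' * e (src b') = mu b'.
  by apply: transvect_arrow_src => //; case: u_bypass.
rewrite (theta_rep_arrow D2_rep (nu_src b)).
have [->|b_al] := eqVneq b al; last first.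
  by rewrite -(transvect_other b_al) (theta_rep_arrow D1_rep (mu_src b)) transvect_other.
have D1_u : D1 (nuPath e nu u) = F (loop u) *: nuPath e nu u.
  case: D1_rep u_bypass => _ D1_paths [u_path _ _ _].
  by rewrite -nuPath_transvect // D1_paths.
have D1_mu := theta_rep_arrow D1_rep (mu_src al).
case: D1_rep => [[D1_lin _ _] _].
apply: (addIr (tau *: D1 (nuPath e nu u))).
rewrite addrC -D1_lin addrC -transvect_arrow D1_mu D1_u -F_tree_loop_bypass.
by rewrite transvect_arrow scalerDr !scalerA mulrC.
Qed.

End Transvection.

Theorem proposition3p2 (k : closedFieldType) (n : nat) (Ar : finType)
  (src tgt : Ar -> 'I_n) (A : falgType k) (e : 'I_n -> A) (nu : Ar -> A)
  (al : Ar) (u : qpath n Ar) (tau : k) (T : {set Ar}) (x0 : 'I_n)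
  (gamma : 'I_n -> qwalk n Ar) :
  no_oriented_cycle src tgt ->
  complete_prim_orth_idems e -> basic_alg e -> connected_alg A ->
  presentation src tgt e nu ->
  bypass src tgt al u ->
  max_tree src tgt T -> gamma_ok src tgt T x0 gamma ->
  homot src tgt e (transvect e nu al u tau) (pwalk (arrow_path src al)) (pwalk u) ->
  forall F : qwalk n Ar -> k,
    pi1_hom src tgt e (transvect e nu al u tau) x0 F ->
    forall D1 D2 : A -> A,
      theta_rep src tgt e (transvect e nu al u tau) gamma F D1 ->
      theta_rep src tgt e nu gamma F D2 ->
      int0 e (fun a => D1 a - D2 a).
Proof.
move=> acyclic [e_idem _ _ _] _ _ nu_pres u_bypass _ gamma_tree al_homot_u F [F_homot _]
  D1 D2 D1_rep D2_rep.
have gamma_walk x : is_walk src tgt (gamma x) by case: (gamma_tree x).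
have gamma_start x : wstart (gamma x) = x0 by case: (gamma_tree x).
have gamma_end x : wend src tgt (gamma x) = x by case: (gamma_tree x).
have nu_src b : nu b * e (src b) = nu b by apply: presentation_arrow_src nu_pres _.
have eq_arrows := theta_rep_transvect_arrows gamma_walk gamma_start gamma_end u_bypass
  (bypass_arrow_notin acyclic u_bypass) e_idem nu_src F_homot al_homot_u D1_rep D2_rep.
have [[D1_der _] [D2_der _]] := (D1_rep, D2_rep).
apply: int0_eq0 => a; apply/eqP; rewrite subr_eq0; apply/eqP.
exact: der0_eq_presentation nu_pres D1_der D2_der eq_arrows a.
Qed.
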